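(* Let $G$ be a finite $d$-regular graph and let $k<d$ be a positive integer. Let $S=(v_1,\ldots,v_m)$, $m\geq1$, be a maximal $k$-$L$-sequence of $G$ (no vertex can be appended to the end of $S$ to obtain a longer $k$-$L$-sequence), and let $x=v_m$ be its last vertex. Then there exists a vertex $y\neq x$, $y\in N(x)$, such that $y$ lies in the open neighborhoods $N(v_j)$ of exactly $k-1$ of the vertices $v_1,\ldots,v_{m-1}$ (i.e., $x$ footprints $y$ for the $k$-th time).
   Context: For a vertex $v$, $N(v)$ is its open neighborhood and $N[v]=N(v)\cup\{v\}$. A sequence $S=(v_1,\ldots,v_m)$ of distinct vertices is a $k$-$L$-sequence if for each $i$ there is $u_i\in N[v_i]$ such that the number of indices $j<i$ with $u_i\in N(v_j)$ is less than $k$. A vertex $v_i$ of $S$ is said to footprint $u$ for the $r$-th time if $u\in N[v_i]$ and $u$ lies in $N(v_j)$ for exactly $r-1$ indices $j<i$. *)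

(* A finite simple graph is a symmetric irreflexive relation
   e : rel T on a finType T. *)
From mathcomp Require Import all_boot.
Set Implicit Arguments. Unset Strict Implicit. Unset Printing Implicit Defensive.

Definition openN (T : finType) (e : rel T) (v : T) : {set T} := [set u | e v u].

Definition regular (T : finType) (e : rel T) (d : nat) : Prop :=
  forall v : T, #|openN e v| = d.

Definition footcount (T : finType) (e : rel T) (p : seq T) (u : T) : nat :=
  count (fun w => u \in openN e w) p.

(* k-L-sequence: distinct vertices; for each entry v_i (with prefix p =
   (v_1,...,v_{i-1})) there is u \in N[v_i] lying in N(v_j) for fewer than
   k indices j < i. *)
Definition is_kLseq (T : finType) (e : rel T) (k : nat) (s : seq T) : Prop :=
  uniq s /\
  forall (p : seq T) (v : T) (q : seq T), s = p ++ v :: q ->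
    exists u : T, (u \in v |: openN e v) /\ footcount e p u < k.

Definition maximal_kLseq (T : finType) (e : rel T) (k : nat) (s : seq T) : Prop :=
  is_kLseq e k s /\ forall w : T, ~ is_kLseq e k (rcons s w).

(* Every vertex u is footprinted at least k times by a maximal k-L-sequence s:
   otherwise, as u has d > k neighbours, some neighbour w of u lies outside s
   (else s would footprint u d times), and w could be appended to s with u as
   witness.  The last vertex x of s has a witness u in N[x] footprinted fewer
   than k times before x; since u ends up footprinted at least k times, x must
   footprint u, so u is a neighbour of x footprinted exactly k-1 times
   before. *)
From mathcomp Require Import all_boot.

Set Implicit Arguments.
Unset Strict Implicit.
Unset Printing Implicit Defensive.

Section KLSequences.

Variables (T : finType) (e : rel T) (k : nat).

Lemma footcount_rcons (p : seq T) (x u : T) :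
  footcount e (rcons p x) u = footcount e p u + (u \in openN e x).
Proof. by rewrite /footcount -cats1 count_cat /= addn0. Qed.

Lemma card_openN_le_footcount (s : seq T) (u : T) :
  symmetric e -> uniq s -> openN e u \subset s -> #|openN e u| <= footcount e s u.
Proof.
move=> e_sym s_uniq /subsetP sub_us; rewrite /footcount -size_filter cardE.
apply: uniq_leq_size; first exact: enum_uniq.
move=> w; rewrite mem_enum => Nw.
by rewrite mem_filter inE -e_sym -[e u w]inE Nw sub_us.
Qed.

Lemma is_kLseq_rcons (s : seq T) (w : T) :
  is_kLseq e k s -> w \notin s ->
  (exists u, u \in w |: openN e w /\ footcount e s u < k) ->
  is_kLseq e k (rcons s w).
Proof.
move=> [s_uniq s_kL] ws witness; split; first by rewrite rcons_uniq ws.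
move=> p v q; case/lastP: q => [|q z].
  by rewrite cats1 => /rcons_inj [<- <-].
by rewrite -rcons_cons -rcons_cat => /rcons_inj [/s_kL].
Qed.

Lemma is_kLseq_last_witness (p : seq T) (x : T) :
  is_kLseq e k (rcons p x) ->
  exists u, u \in x |: openN e x /\ footcount e p u < k.
Proof. by case=> _ /(_ p x [::]); apply; rewrite cats1. Qed.

Lemma maximal_kLseq_footcount_ge (s : seq T) (u : T) :
  symmetric e -> maximal_kLseq e k s -> k <= #|openN e u| ->
  k <= footcount e s u.
Proof.
move=> e_sym [s_kL s_max] k_le_deg; rewrite leqNgt; apply/negP => fc_lt.
have [N_sub_s | /subsetPn [w Nw ws]] := boolP (openN e u \subset s).
  have := card_openN_le_footcount e_sym s_kL.1 N_sub_s.
  by apply/negP; rewrite -ltnNge (leq_trans fc_lt k_le_deg).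
apply: (s_max w); apply: is_kLseq_rcons => //.
by exists u; rewrite !inE -e_sym -[e u w]inE Nw orbT.
Qed.

End KLSequences.

Theorem mainTheorem10 (T : finType) (e : rel T) (d k : nat)
    (e_sym : symmetric e) (e_irr : irreflexive e) (reg : regular e d)
    (k_pos : 0 < k) (k_lt_d : k < d)
    (s : seq T) (s_nonempty : 0 < size s) (s_max : maximal_kLseq e k s)
    (x : T) (x_last : x = last x s) :
  exists y : T, [/\ y != x, y \in openN e x &
    footcount e (take (size s).-1 s) y = k.-1].
Proof.
have fc_ge u : k <= footcount e s u.
  by apply: maximal_kLseq_footcount_ge => //; rewrite reg ltnW.
move: s_nonempty s_max x_last fc_ge; case/lastP: s => [//|p z] _ s_max.
rewrite last_rcons size_rcons /= -cats1 take_size_cat // cats1 => <- fc_ge.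
have [u [Nxu fc_lt]] := is_kLseq_last_witness s_max.1.
have := fc_ge u; rewrite footcount_rcons.
have [xNu | /negbTE xNu] := boolP (u \in openN e x); last first.
  by rewrite addn0 leqNgt fc_lt.
rewrite addn1 => fc_ge_u; exists u; split => //.
- by apply: contraTneq xNu => ->; rewrite inE e_irr.
- by apply/eqP; rewrite -eqSS prednK // eqn_leq fc_lt.
Qed.
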